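(* Let $A\in\mathbb{R}^{n\times n}$ and $B\in\mathbb{R}^{r\times r}$ be symmetric positive semidefinite with $r\le n$, with eigendecompositions $A=\sum_{i=1}^{n}s_{i}u_{i}u_{i}^{T}$, $\sum_{i=1}^{n}u_{i}u_{i}^{T}=I_{n}$, $s_{1}\ge\cdots\ge s_{n}\ge0$, and $B=\sum_{i=1}^{r}d_{i}v_{i}v_{i}^{T}$, $\sum_{i=1}^{r}v_{i}v_{i}^{T}=I_{r}$, $0\le d_{1}\le\cdots\le d_{r}$. Then $$\min_{Y\in\mathbb{R}^{n\times r}}\left\{\|A-YY^{T}\|_{F}^{2}+2\langle B,Y^{T}Y\rangle\right\}=\sum_{i=1}^{n}s_{i}^{2}-\sum_{i=1}^{r}[(s_{i}-d_{i})_{+}]^{2},$$ with a minimizer $Y^{\star}=\sum_{i=1}^{r}u_{i}v_{i}^{T}\sqrt{(s_{i}-d_{i})_{+}}$.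
   Context: $\langle A,B\rangle=\mathrm{tr}(A^{T}B)$ and $x_{+}=\max\{0,x\}$. *)

From HB Require Import structures.
From mathcomp Require Import all_boot all_order all_algebra.
From mathcomp Require Import reals.
Set Implicit Arguments. Unset Strict Implicit. Unset Printing Implicit Defensive.
Import Order.TTheory GRing.Theory Num.Theory.
Local Open Scope ring_scope.

Definition frob2 (R : realType) (m n : nat) (M : 'M[R]_(m, n)) : R :=
  \sum_(i < m) \sum_(j < n) M i j ^+ 2.

Definition frob_inner (R : realType) (m n : nat) (A B : 'M[R]_(m, n)) : R :=
  \tr (A^T *m B).

Definition pospart (R : realType) (x : R) : R := Num.max 0 x.

(* Write Y^T Y = \sum_k lam_k w_k w_k^T with an orthonormal eigenbasis (w_k).
   Expanding the objective in the eigenbases (u_i), (v_j), (w_k) gives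
     \sum_i s_i^2 - \sum_k (2 (\sum_i s_i e_ik - lam_k \sum_j d_j q_jk) - lam_k^2)
   with e_ik = <u_i, Y w_k>^2 and q_jk = <v_j, w_k>^2.  The tangent inequality
   lam (2 x - lam) <= (x_+)^2 bounds the subtracted sum by \sum_ij T_ij (s_i - d_j)_+^2,
   where T_ij = \sum_k (e_ik / lam_k) q_jk is doubly substochastic by Parseval and
   Bessel.  For s nonincreasing and d nondecreasing the cost (s_i - d_j)_+^2 is a
   Monge array, so the best doubly substochastic T is the identity on the first r
   indices; an explicit telescoping dual solution certifies this.  Y* attains the
   bound because its Gram matrix is diagonal in (v_j). *)

From HB Require Import structures.
From mathcomp Require Import all_boot all_order all_algebra.
From mathcomp Require Import reals.
From mathcomp Require Import ring lra.
From mathcomp.real_closed Require Import complex.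
Set Implicit Arguments. Unset Strict Implicit. Unset Printing Implicit Defensive.
Import Order.TTheory GRing.Theory Num.Theory.
Local Open Scope ring_scope.

Definition dot (R : pzRingType) k (x y : 'cV[R]_k) : R := (x^T *m y) 0 0.

Section DotProduct.
Variable R : realDomainType.
Lemma dotE k (x y : 'cV[R]_k) : dot x y = \sum_i x i 0 * y i 0.
Proof. by rewrite /dot mxE; apply: eq_bigr => i _; rewrite mxE. Qed.

Lemma dotC k (x y : 'cV[R]_k) : dot x y = dot y x.
Proof. by rewrite !dotE; apply: eq_bigr => i _; rewrite mulrC. Qed.

Lemma dotDr k (x y z : 'cV[R]_k) : dot x (y + z) = dot x y + dot x z.
Proof. by rewrite !dotE -big_split; apply: eq_bigr => i _; rewrite !mxE mulrDr. Qed.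

Lemma dotBr k (x y z : 'cV[R]_k) : dot x (y - z) = dot x y - dot x z.
Proof. by rewrite !dotE -sumrB; apply: eq_bigr => i _; rewrite !mxE mulrBr. Qed.

Lemma dotBl k (x y z : 'cV[R]_k) : dot (x - y) z = dot x z - dot y z.
Proof. by rewrite dotC dotBr !(dotC z). Qed.

Lemma dotZr k a (x y : 'cV[R]_k) : dot x (a *: y) = a * dot x y.
Proof. by rewrite /dot -scalemxAr mxE. Qed.

Lemma dotZl k a (x y : 'cV[R]_k) : dot (a *: x) y = a * dot x y.
Proof. by rewrite dotC dotZr dotC. Qed.

Lemma dot_sumr k I (idx : seq I) (P : pred I) (x : 'cV[R]_k) F :
  dot x (\sum_(i <- idx | P i) F i) = \sum_(i <- idx | P i) dot x (F i).
Proof. by rewrite /dot mulmx_sumr summxE. Qed.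

Lemma dot_suml k I (idx : seq I) (P : pred I) (x : 'cV[R]_k) F :
  dot (\sum_(i <- idx | P i) F i) x = \sum_(i <- idx | P i) dot (F i) x.
Proof. by rewrite dotC dot_sumr; apply: eq_bigr => i _; rewrite dotC. Qed.

Lemma dot_mulmx k l (A : 'M[R]_(k, l)) x y : dot x (A *m y) = dot (A^T *m x) y.
Proof. by rewrite /dot trmx_mul trmxK mulmxA. Qed.

Lemma dot_self_ge0 k (x : 'cV[R]_k) : 0 <= dot x x.
Proof. by rewrite dotE; apply: sumr_ge0 => i _; rewrite -expr2 sqr_ge0. Qed.

Lemma dot_self_eq0 k (x : 'cV[R]_k) : (dot x x == 0) = (x == 0).
Proof.
apply/idP/eqP => [|->]; last by rewrite /dot mulmx0 mxE.
rewrite dotE psumr_eq0 => [/allP x0|i _]; last by rewrite -expr2 sqr_ge0.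
apply/matrixP => i j; rewrite ord1 mxE.
by apply/eqP; rewrite -sqrf_eq0 expr2; exact: x0 (mem_index_enum _).
Qed.

Lemma mulmx_dot k l (x : 'cV[R]_l) (y z : 'cV[R]_k) : x *m (y^T *m z) = dot y z *: x.
Proof.
suff -> : y^T *m z = (dot y z)%:M by rewrite mul_mx_scalar.
by apply/matrixP => a b; rewrite !ord1 [RHS]mxE eqxx mulr1n.
Qed.

Lemma mxtrace_mul_rank1 k (X : 'M[R]_k) (w : 'cV[R]_k) :
  \tr (X *m (w *m w^T)) = dot w (X *m w).
Proof. by rewrite mulmxA mxtrace_mulC /mxtrace big_ord1. Qed.

Lemma mxtrace_mul_rank1_sum k m (X : 'M[R]_k) (c : 'I_m -> R) w :
  \tr (X *m \sum_i c i *: (w i *m (w i)^T)) = \sum_i c i * dot (w i) (X *m w i).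
Proof.
rewrite mulmx_sumr raddf_sum /=; apply: eq_bigr => i _.
by rewrite -scalemxAr mxtraceZ mxtrace_mul_rank1.
Qed.

Lemma dot_rank1_sum k m (c : 'I_m -> R) w (x : 'cV[R]_k) :
  dot x ((\sum_i c i *: (w i *m (w i)^T)) *m x) = \sum_i c i * dot (w i) x ^+ 2.
Proof.
rewrite mulmx_suml dot_sumr; apply: eq_bigr => i _.
by rewrite -scalemxAl -mulmxA mulmx_dot dotZr dotZr (dotC x) expr2 mulrA.
Qed.

Definition orthonormal k m (w : 'I_m -> 'cV[R]_k) :=
  forall i j, dot (w i) (w j) = (i == j)%:R.

Lemma rank1_sum_mulmx k l m (c : 'I_m -> R) (x : 'I_m -> 'cV[R]_l) w j :
  orthonormal w -> (\sum_i c i *: (x i *m (w i : 'cV[R]_k)^T)) *m w j = c j *: x j.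
Proof.
move=> wo; rewrite mulmx_suml (bigD1 j) //= big1 => [|i /negbTE ij].
  by rewrite addr0 -scalemxAl -mulmxA mulmx_dot wo eqxx scale1r.
by rewrite -scalemxAl -mulmxA mulmx_dot wo ij scale0r scaler0.
Qed.

Lemma orthonormal_comp k m m' (w : 'I_m -> 'cV[R]_k) (f : 'I_m' -> 'I_m) :
  injective f -> orthonormal w -> orthonormal (w \o f).
Proof. by move=> f_inj wo i j; rewrite /= wo (inj_eq f_inj). Qed.

Section Resolution.
Variables (k : nat) (w : 'I_k -> 'cV[R]_k).
Hypothesis w_res : \sum_i w i *m (w i)^T = 1%:M.

Lemma resolution_orthonormal : orthonormal w.
Proof.
(* With W the matrix of columns w i, W W^T = 1 forces W^T W = 1. *)
pose W : 'M[R]_k := \matrix_(a, b) w b a 0.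
have WWt : W *m W^T = 1%:M.
  rewrite -w_res; apply/matrixP => a b; rewrite mxE summxE.
  by apply: eq_bigr => c _; rewrite !mxE big_ord1 !mxE.
move=> i j; have /matrixP/(_ i j) := mulmx1C WWt.
rewrite !mxE dotE => <-; by apply: eq_bigr => c _; rewrite !mxE.
Qed.

Lemma resolution_parseval (x : 'cV[R]_k) : \sum_i dot (w i) x ^+ 2 = dot x x.
Proof.
rewrite -{3}[x]mul1mx -w_res mulmx_suml dot_sumr; apply: eq_bigr => i _.
by rewrite -mulmxA mulmx_dot dotZr (dotC x) expr2.
Qed.

Lemma resolution_mulmx l (Y : 'M[R]_(l, k)) :
  Y *m Y^T = \sum_i (Y *m w i) *m (Y *m w i)^T.
Proof.
rewrite -[Y in Y *m _]mulmx1 -w_res mulmx_sumr mulmx_suml.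
by apply: eq_bigr => i _; rewrite trmx_mul !mulmxA.
Qed.

End Resolution.

End DotProduct.

Section Orthogonality.
Variable R : realFieldType.

Lemma bessel k m (y : 'I_m -> 'cV[R]_k) (x : 'cV[R]_k) :
  (forall i j, i != j -> dot (y i) (y j) = 0) ->
  \sum_i dot x (y i) ^+ 2 / dot (y i) (y i) <= dot x x.
Proof.
(* t is the orthogonal projection of x onto the span of the y i. *)
move=> y_orth; pose t := \sum_i (dot (y i) x / dot (y i) (y i)) *: y i.
have tx : dot t x = \sum_i dot x (y i) ^+ 2 / dot (y i) (y i).
  by rewrite dot_suml; apply: eq_bigr => i _; rewrite dotZl (dotC x) expr2 mulrAC.
have tt : dot t t = \sum_i dot x (y i) ^+ 2 / dot (y i) (y i).
  rewrite {1}/t dot_suml; apply: eq_bigr => i _.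
  rewrite dotZl dot_sumr (bigD1 i) //= big1 => [|j ji]; last first.
    by rewrite dotZr (y_orth i j) ?mulr0 // eq_sym.
  rewrite addr0 dotZr (dotC x).
  have [->|yi_neq0] := eqVneq (dot (y i) (y i)) 0; first by rewrite invr0 !mulr0.
  by field.
have := dot_self_ge0 (x - t).
by rewrite dotBl !dotBr (dotC x t) tx tt; lra.
Qed.

Lemma householder_reflection m (x : 'cV[R]_(1 + m)) : dot x x = 1 ->
  exists H : 'M[R]_(1 + m), [/\ H^T = H, H *m H = 1%:M & H *m col_mx 1%:M 0 = x].
Proof.
move=> x1; set e : 'cV[R]_(1 + m) := col_mx 1%:M 0; pose v := x - e.
have [/eqP|v_neq0] := eqVneq v 0.
  by rewrite subr_eq0 => /eqP ->; exists 1%:M; rewrite trmx1 mulmx1 mul1mx.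
have ee : dot e e = 1.
  by rewrite /dot tr_col_mx trmx1 trmx0 mul_row_col mulmx0 addr0 mulmx1 mxE eqxx mulr1n.
have vv_neq0 : dot v v != 0 by rewrite dot_self_eq0.
have vv : dot v v = - 2 * dot v e by rewrite /v !dotBl !dotBr x1 ee (dotC e); ring.
have ve_neq0 : dot v e != 0 by apply: contraNneq vv_neq0; rewrite vv => ->; rewrite mulr0.
set c := 2 / dot v v; set P := v *m v^T.
have PP : P *m P = dot v v *: P by rewrite mulmxA -(mulmxA v) mulmx_dot -scalemxAl.
exists (1%:M - c *: P); split.
- by rewrite linearB /= trmx1 linearZ /= trmx_mul trmxK.
- rewrite mulmxBl mul1mx mulmxBr mulmx1 -scalemxAl -scalemxAr PP.
  by apply/matrixP => i j; rewrite !mxE /c; field.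
- rewrite mulmxBl mul1mx -scalemxAl -mulmxA mulmx_dot scalerA.
  have -> : c * dot v e = -1 by rewrite /c vv; field.
  by rewrite scaleN1r opprK addrC subrK.
Qed.

End Orthogonality.

Lemma mulmx_shift (R : comNzRingType) k (X : 'M[R]_k) a b :
  (X - a%:M) *m (X - b%:M) = X *m X - (a + b) *: X + (a * b)%:M.
Proof.
rewrite mulmxBl !mulmxBr mul_mx_scalar mul_scalar_mx -scalar_mxM.
by apply/matrixP => i j; rewrite !mxE; ring.
Qed.

Lemma block_diag_conj (R : pzRingType) p m (C : 'M[R]_p) (X W : 'M[R]_m) :
  (block_mx 1%:M 0 0 W)^T *m block_mx C 0 0 X *m block_mx 1%:M 0 0 W
  = block_mx C 0 0 (W^T *m X *m W).
Proof.
rewrite tr_block_mx !mulmx_block !trmx0 !trmx1 !mulmx0 !mul0mx !mulmx1 !mul1mx.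
by rewrite !addr0 !add0r mul0mx.
Qed.

Lemma symmetric_block_eigen (R : pzRingType) m (P : 'M[R]_(1 + m)) a :
  P^T = P -> P *m col_mx 1%:M 0 = a *: col_mx 1%:M 0 ->
  P = block_mx a%:M 0 0 (drsubmx P).
Proof.
move=> PT; rewrite -[P in P *m _]submxK mul_block_col !mulmx0 !addr0 !mulmx1.
rewrite scale_col_mx scaler0 scalemx1 => /eq_col_mx [ul dl].
rewrite -[LHS]submxK ul dl; congr block_mx.
by rewrite -PT -trmx_dlsub dl trmx0.
Qed.

Section Spectral.
Variable R : rcfType.

Lemma symmetric_shift_kernel k (M : 'M[R]_k) a b (x : 'cV[R]_k) : M^T = M ->
  ((M - a%:M) *m (M - a%:M) + (b ^+ 2)%:M) *m x = 0 -> (M - a%:M) *m x = 0.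
Proof.
move=> MT Nx; set y := (M - a%:M) *m x.
have MaT : (M - a%:M)^T = M - a%:M by rewrite linearB /= MT tr_scalar_mx.
have : dot y y + b ^+ 2 * dot x x = 0.
  have := congr1 (dot x) Nx.
  rewrite mulmxDl dotDr -mulmxA dot_mulmx MaT mul_scalar_mx dotZr -/y => ->.
  by rewrite /dot mulmx0 mxE.
move=> yx0; apply/eqP; rewrite -dot_self_eq0 eq_le dot_self_ge0 andbT.
by rewrite -(lerD2r (b ^+ 2 * dot x x)) yx0 add0r mulr_ge0 ?sqr_ge0 ?dot_self_ge0.
Qed.

Lemma real_shift_singular k (M : 'M[R]_k.+1) :
  exists a b, \det ((M - a%:M) *m (M - a%:M) + (b ^+ 2)%:M) = 0.
Proof.
(* For an eigenvalue z = a + ib of M over R[i], (M - a)^2 + b^2 = (M - z)(M - conj z). *)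
pose f := real_complex R; pose Mc := map_mx f M.
have [z] : exists z, root (char_poly Mc) z by apply/closed_rootP; rewrite size_char_poly.
rewrite -eigenvalue_root_char => /eigenvalueP [v vMc v_neq0].
exists (complex.Re z), (complex.Im z); apply/eqP.
rewrite -(fmorph_eq0 f) -det_map_mx; apply/det0P; exists v => //.
have [fRe2 fNorm] : f (complex.Re z + complex.Re z) = z + conjc z /\
    f (complex.Re z * complex.Re z + complex.Im z ^+ 2) = z * conjc z.
  by case: z {vMc} => a b /=; split; apply/eqP; rewrite eq_complex /=; apply/andP; split;
    apply/eqP; ring.
have scalarD (x y : R) : x%:M + y%:M = (x + y)%:M :> 'M_k.+1 by rewrite -raddfD.
suff -> : map_mx f ((M - (complex.Re z)%:M) *m (M - (complex.Re z)%:M)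
                     + (complex.Im z ^+ 2)%:M) = (Mc - z%:M) *m (Mc - (conjc z)%:M).
  by rewrite mulmxA (mulmxBr v) vMc mul_mx_scalar subrr mul0mx.
rewrite [RHS]mulmx_shift -fRe2 -fNorm -map_mxM -map_mxZ -map_mxB -map_scalar_mx -map_mxD.
by rewrite mulmx_shift -addrA scalarD.
Qed.

Lemma symmetric_eigenvector k (M : 'M[R]_k.+1) : M^T = M ->
  exists a, exists2 x : 'cV[R]_k.+1, dot x x = 1 & M *m x = a *: x.
Proof.
move=> MT; have [a [b /eqP]] := real_shift_singular M.
set N := _ + _ => /det0P [y y_neq0 yN].
have NT : N^T = N.
  by rewrite linearD /= tr_scalar_mx trmx_mul linearB /= MT tr_scalar_mx.
have /(symmetric_shift_kernel MT) : N *m y^T = 0 by rewrite -NT -trmx_mul yN trmx0.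
rewrite mulmxBl mul_scalar_mx => /eqP; rewrite subr_eq0 => /eqP My.
have yy_gt0 : 0 < dot y^T y^T.
  by rewrite lt_def dot_self_ge0 andbT dot_self_eq0 trmx_eq0.
exists a, ((Num.sqrt (dot y^T y^T))^-1 *: y^T).
  by rewrite dotZl dotZr mulrA -expr2 exprVn sqr_sqrtr ?ltW // mulVf ?gt_eqF.
by rewrite -scalemxAr My !scalerA mulrC.
Qed.

Lemma symmetric_orthogonal_diag m (M : 'M[R]_m) : M^T = M ->
  exists (W : 'M[R]_m) (l : 'rV[R]_m), W^T *m W = 1%:M /\ W^T *m M *m W = diag_mx l.
Proof.
(* Conjugating by a reflection that maps e_0 to a unit eigenvector deflates M. *)
elim: m M => [|m IH] M MT; first by exists 1%:M, 0; split; apply/matrixP => [] [].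
have [a [x x1 Mx]] := symmetric_eigenvector MT.
have [H [HT HH He]] := householder_reflection x1.
pose P : 'M[R]_(1 + m) := H *m M *m H.
have PT : P^T = P by rewrite !trmx_mul HT MT mulmxA.
have /(symmetric_block_eigen PT) Pblk : P *m col_mx 1%:M 0 = a *: col_mx 1%:M 0.
  by rewrite -mulmxA He -mulmxA Mx -scalemxAr -He mulmxA HH mul1mx.
have /IH [W [l [WW WPW]]] : (drsubmx P)^T = drsubmx P by rewrite trmx_drsub PT.
pose B : 'M[R]_(1 + m) := block_mx 1%:M 0 0 W.
exists (H *m B), (row_mx a%:M l); split.
  rewrite trmx_mul HT mulmxA -(mulmxA _ H H) HH mulmx1.
  have := block_diag_conj (1%:M : 'M_1) 1%:M W.
  by rewrite mulmx1 WW -!scalar_mx_block mulmx1.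
have -> : (H *m B)^T *m M *m (H *m B) = B^T *m P *m B by rewrite trmx_mul HT !mulmxA.
rewrite Pblk block_diag_conj WPW (diag_mx_row (a%:M : 'rV_1) l).
suff -> : diag_mx (a%:M : 'rV_1) = a%:M by [].
by apply/matrixP => i j; rewrite !ord1 !mxE.
Qed.

Lemma symmetric_spectral_resolution m (M : 'M[R]_m) : M^T = M ->
  exists (w : 'I_m -> 'cV[R]_m) (lam : 'I_m -> R),
    \sum_k w k *m (w k)^T = 1%:M /\ M = \sum_k lam k *: (w k *m (w k)^T).
Proof.
move=> /symmetric_orthogonal_diag [W [l [WW WMW]]].
have WWt := mulmx1C WW.
exists (fun k => col k W), (l 0); split.
  rewrite -WWt; apply/matrixP => i j; rewrite summxE !mxE.
  by apply: eq_bigr => k _; rewrite !mxE big_ord1 !mxE.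
have -> : M = W *m (W^T *m M *m W) *m W^T.
  by rewrite !mulmxA WWt mul1mx -mulmxA WWt mulmx1.
rewrite WMW mul_mx_diag; apply/matrixP => i j; rewrite summxE !mxE.
by apply: eq_bigr => k _; rewrite !mxE big_ord1 !mxE mulrCA mulrA.
Qed.

End Spectral.

Section PositivePart.
Variable R : realType.
Implicit Types x y : R.

Lemma pospartE x : pospart x = if 0 <= x then x else 0.
Proof. by rewrite /pospart maxEle. Qed.

Lemma pospart_ge0 x : 0 <= pospart x.
Proof. by rewrite /pospart le_max lexx. Qed.

Lemma sqr_pospart x : pospart x ^+ 2 = pospart x * x.
Proof. by rewrite pospartE; case: leP; rewrite ?expr2 ?mul0r. Qed.

Lemma sqr_pospart_ge_tangent (x lam : R) : 0 <= lam -> lam * (2 * x - lam) <= pospart x ^+ 2.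
Proof.
move=> lam_ge0; rewrite pospartE; case: (leP 0 x) => x0.
  by have := sqr_ge0 (x - lam); nra.
have : 0 <= lam * - x by rewrite mulr_ge0 // oppr_ge0 ltW.
by rewrite expr2; nra.
Qed.

Lemma sqr_pospart_le x y : x <= y -> pospart x ^+ 2 <= pospart y ^+ 2.
Proof.
by move=> xy; rewrite !pospartE; case: (leP 0 x); case: (leP 0 y); rewrite !expr2; nra.
Qed.

Lemma sqr_pospart_supermodular x x' y y' : x' <= x -> y <= y' ->
  pospart (x - y') ^+ 2 + pospart (x' - y) ^+ 2
    <= pospart (x - y) ^+ 2 + pospart (x' - y') ^+ 2.
Proof.
move=> x'x yy'; rewrite !pospartE.
by case: (leP 0 (x - y')); case: (leP 0 (x' - y)); case: (leP 0 (x - y));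
  case: (leP 0 (x' - y')); rewrite !expr2; nra.
Qed.

Lemma weighted_tangent_le (e q lam x : R) : 0 <= e -> e <= lam -> 0 <= q ->
  e * q * (2 * x - lam) <= e / lam * q * pospart x ^+ 2.
Proof.
move=> e_ge0 e_le q_ge0; have [lam0|lam_neq0] := eqVneq lam 0.
  have -> : e = 0 by apply/eqP; rewrite eq_le e_ge0 -lam0 e_le.
  by rewrite !mul0r.
have lam_gt0 : 0 < lam by rewrite lt_def lam_neq0 (le_trans e_ge0 e_le).
have -> : e * q * (2 * x - lam) = e / lam * q * (lam * (2 * x - lam)) by field.
apply: ler_wpM2l; last exact: sqr_pospart_ge_tangent (ltW lam_gt0).
by apply: mulr_ge0 => //; apply: divr_ge0 => //; exact: ltW.
Qed.

End PositivePart.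

Lemma substochastic_dual_le (R : numDomainType) n m (T c : 'I_n -> 'I_m -> R)
    (alpha : 'I_n -> R) (beta : 'I_m -> R) :
  (forall i j, 0 <= T i j) -> (forall i, \sum_j T i j <= 1) ->
  (forall j, \sum_i T i j <= 1) ->
  (forall i, 0 <= alpha i) -> (forall j, 0 <= beta j) ->
  (forall i j, c i j <= alpha i + beta j) ->
  \sum_i \sum_j T i j * c i j <= \sum_i alpha i + \sum_j beta j.
Proof.
move=> T_ge0 T_row T_col alpha_ge0 beta_ge0 c_le.
apply: (@le_trans _ _ (\sum_i \sum_j T i j * (alpha i + beta j))).
  by apply: ler_sum => i _; apply: ler_sum => j _; rewrite ler_wpM2l.
have -> : \sum_i \sum_j T i j * (alpha i + beta j)
    = \sum_i (\sum_j T i j) * alpha i + \sum_j (\sum_i T i j) * beta j.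
  rewrite [LHS](eq_bigr (fun i => \sum_j T i j * alpha i + \sum_j T i j * beta j)).
    by rewrite big_split /= [X in _ + X]exchange_big; congr (_ + _);
      apply: eq_bigr => i _; rewrite mulr_suml.
  by move=> i _; rewrite -big_split; apply: eq_bigr => j _; rewrite mulrDr.
by apply: lerD; apply: ler_sum => i _; apply: ler_piMl.
Qed.

Section MongeDual.
Variable R : realType.
Variables (S D : nat -> R) (r : nat).
Hypothesis S_decr : forall a b, (a <= b)%N -> S b <= S a.
Hypothesis D_incr : forall a b, (a <= b < r)%N -> D a <= D b.

Local Notation g a b := (pospart (S a - D b) ^+ 2).

(* A dual solution of the transport problem with value \sum_b g b b: the potentials
   add up to g a a on the diagonal, and supermodularity of g propagates
   feasibility away from it. *)
Definition row_potential a := \sum_(a <= k < r) (g k k - g k.+1 k).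
Definition col_potential b := g b b - row_potential b.

Lemma cost_supermodular a a' b b' : (a <= a')%N -> (b <= b' < r)%N ->
  g a b' + g a' b <= g a b + g a' b'.
Proof.
by move=> aa' bb'; apply: sqr_pospart_supermodular; [apply: S_decr | apply: D_incr].
Qed.

Lemma cost_decr a a' b : (a <= a')%N -> g a' b <= g a b.
Proof. by move=> aa'; apply: sqr_pospart_le; rewrite lerD2r S_decr. Qed.

Lemma row_potential_ge0 a : 0 <= row_potential a.
Proof. by apply: sumr_ge0 => k _; rewrite subr_ge0 cost_decr. Qed.

Lemma row_potential_out a : (r <= a)%N -> row_potential a = 0.
Proof. by move=> ra; rewrite /row_potential big_geq. Qed.

Lemma row_potential_step a : (a < r)%N ->
  row_potential a = g a a - g a.+1 a + row_potential a.+1.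
Proof. by move=> ar; rewrite /row_potential big_ltn. Qed.

Lemma col_potential_step b : (b.+1 < r)%N ->
  col_potential b.+1 = col_potential b - g b.+1 b + g b.+1 b.+1.
Proof. by move=> br; rewrite /col_potential (row_potential_step (ltnW br)); ring. Qed.

Lemma potential_feasible_le a b : (a <= b)%N -> (b < r)%N ->
  g a b <= row_potential a + col_potential b.
Proof.
elim: b => [|b IH] ab br.
  by move: ab; rewrite leqn0 => /eqP ->; rewrite /col_potential subrKC.
move: ab; rewrite leq_eqVlt ltnS => /orP [/eqP ->|ab].
  by rewrite /col_potential subrKC.
have := IH ab (ltnW br); rewrite col_potential_step //.
have : (b <= b.+1 < r)%N by rewrite leqnSn br.
by move/(cost_supermodular (leqW ab)); lra.
Qed.

Lemma potential_feasible_gt a b : (b < a)%N -> (b < r)%N ->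
  g a b <= row_potential a + col_potential b.
Proof.
move=> + br; elim: a => [//|a IH].
rewrite ltnS leq_eqVlt => /orP [/eqP <-|ba].
  by rewrite /col_potential (row_potential_step br); lra.
have := IH ba; case: (ltnP a r) => ar.
  rewrite (row_potential_step ar).
  have : (b <= a < r)%N by rewrite (ltnW ba) ar.
  by move/(cost_supermodular (leqnSn a)); lra.
rewrite !row_potential_out ?(leqW ar) //.
by have := cost_decr b (leqnSn a); lra.
Qed.

Lemma potential_feasible a b : (b < r)%N -> g a b <= row_potential a + col_potential b.
Proof.
move=> br; case: (leqP a b) => ab; first exact: potential_feasible_le.
exact: potential_feasible_gt.
Qed.

Lemma col_potential_ge0 b : (b < r)%N -> 0 <= col_potential b.
Proof.
move=> br; have := potential_feasible r br.
by rewrite row_potential_out // add0r; apply: le_trans; apply: sqr_ge0.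
Qed.

Lemma potential_sum n : (r <= n)%N ->
  \sum_(a < n) row_potential a + \sum_(b < r) col_potential b = \sum_(b < r) g b b.
Proof.
move=> rn; rewrite (bigID (fun a : 'I_n => (a < r)%N)) /=.
rewrite [X in _ + X + _]big1 => [|a]; last by rewrite -leqNgt => /row_potential_out.
rewrite addr0 -(big_ord_widen _ row_potential rn) -big_split /=.
by apply: eq_bigr => b _; rewrite /col_potential subrKC.
Qed.

End MongeDual.

Section Transport.
Variable R : realType.

Lemma monge_transport_le n r (hrn : (r <= n)%N) (s : 'I_n -> R) (d : 'I_r -> R)
    (T : 'I_n -> 'I_r -> R) :
  (forall i j : 'I_n, (i <= j)%N -> s j <= s i) -> (forall i, 0 <= s i) ->
  (forall i j : 'I_r, (i <= j)%N -> d i <= d j) ->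
  (forall i j, 0 <= T i j) -> (forall i, \sum_j T i j <= 1) ->
  (forall j, \sum_i T i j <= 1) ->
  \sum_i \sum_j T i j * pospart (s i - d j) ^+ 2
    <= \sum_(i < r) pospart (s (widen_ord hrn i) - d i) ^+ 2.
Proof.
move=> s_decr s_ge0 d_incr T_ge0 T_row T_col.
(* Extending s by 0 keeps it nonincreasing because s >= 0. *)
pose S a := if insub a is Some i then s i else 0.
pose D b := if insub b is Some j then d j else 0.
have S_ord (i : 'I_n) : S i = s i by rewrite /S valK.
have D_ord (j : 'I_r) : D j = d j by rewrite /D valK.
have S_decr a b : (a <= b)%N -> S b <= S a.
  rewrite /S; case: insubP => [j _ <-|_]; case: insubP => [i _ <-|an] ab //.
  - exact: s_decr.
  - by move: an; rewrite (leq_ltn_trans ab (ltn_ord j)).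
have D_incr a b : (a <= b < r)%N -> D a <= D b.
  case/andP=> ab br; have ar := leq_ltn_trans ab br.
  by rewrite -[b]/(val (Ordinal br)) -[a]/(val (Ordinal ar)) !D_ord d_incr.
have -> : \sum_(i < r) pospart (s (widen_ord hrn i) - d i) ^+ 2
    = \sum_(i < n) row_potential S D r i + \sum_(j < r) col_potential S D r j.
  rewrite (potential_sum _ _ hrn); apply: eq_bigr => i _.
  by rewrite -D_ord -(S_ord (widen_ord hrn i)).
apply: substochastic_dual_le => // [i|j|i j].
- exact: row_potential_ge0.
- exact: col_potential_ge0.
- by rewrite -S_ord -D_ord; apply: potential_feasible.
Qed.

Lemma coupling_gain_le n r m (hrn : (r <= n)%N) (s : 'I_n -> R) (d : 'I_r -> R)
    (e : 'I_n -> 'I_m -> R) (q : 'I_r -> 'I_m -> R) (lam : 'I_m -> R) :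
  (forall i j : 'I_n, (i <= j)%N -> s j <= s i) -> (forall i, 0 <= s i) ->
  (forall i j : 'I_r, (i <= j)%N -> d i <= d j) ->
  (forall i k, 0 <= e i k) -> (forall j k, 0 <= q j k) ->
  (forall k, \sum_i e i k = lam k) -> (forall k, \sum_j q j k = 1) ->
  (forall j, \sum_k q j k = 1) -> (forall i, \sum_k e i k / lam k <= 1) ->
  \sum_k (2 * (\sum_i s i * e i k - lam k * \sum_j d j * q j k) - lam k ^+ 2)
    <= \sum_(i < r) pospart (s (widen_ord hrn i) - d i) ^+ 2.
Proof.
move=> s_decr s_ge0 d_incr e_ge0 q_ge0 e_col q_col q_row e_row.
have e_le i k : e i k <= lam k.
  by rewrite -e_col (bigD1 i) //= lerDl sumr_ge0.
have term k : 2 * (\sum_i s i * e i k - lam k * \sum_j d j * q j k) - lam k ^+ 2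
    = \sum_i \sum_j e i k * q j k * (2 * (s i - d j) - lam k).
  transitivity (\sum_i \sum_j
      (e i k * (2 * s i - lam k) * q j k - e i k * (2 * (d j * q j k)))).
    rewrite [RHS](eq_bigr (fun i =>
      e i k * (2 * s i - lam k) - e i k * (2 * \sum_j d j * q j k))).
      rewrite sumrB -mulr_suml e_col.
      have -> : \sum_i e i k * (2 * s i - lam k) = \sum_i (2 * (s i * e i k) - lam k * e i k).
        by apply: eq_bigr => i _; ring.
      by rewrite sumrB -!mulr_sumr e_col; ring.
    by move=> i _; rewrite sumrB -!mulr_sumr q_col mulr1.
  by apply: eq_bigr => i _; apply: eq_bigr => j _; ring.
pose T i j := \sum_k e i k / lam k * q j k.
apply: (@le_trans _ _ (\sum_i \sum_j T i j * pospart (s i - d j) ^+ 2)); last first.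
  apply: monge_transport_le => // [i j|i|j].
  - by apply: sumr_ge0 => k _; rewrite mulr_ge0 ?divr_ge0 // (le_trans (e_ge0 i k)).
  - suff -> : \sum_j T i j = \sum_k e i k / lam k by [].
    by rewrite exchange_big; apply: eq_bigr => k _; rewrite -mulr_sumr q_col mulr1.
  - rewrite exchange_big -(q_row j); apply: ler_sum => k _ /=.
    rewrite -mulr_suml ler_piMl // -mulr_suml e_col.
    by have [->|lam_neq0] := eqVneq (lam k) 0; rewrite ?mul0r ?ler01 // divff.
have -> : \sum_i \sum_j T i j * pospart (s i - d j) ^+ 2
    = \sum_k \sum_i \sum_j e i k / lam k * q j k * pospart (s i - d j) ^+ 2.
  rewrite [RHS]exchange_big; apply: eq_bigr => i _ /=.
  by rewrite [RHS]exchange_big; apply: eq_bigr => j _ /=; rewrite mulr_suml.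
rewrite (eq_bigr _ (fun k _ => term k)).
apply: ler_sum => k _; apply: ler_sum => i _; apply: ler_sum => j _.
exact: weighted_tangent_le.
Qed.

End Transport.

Section Objective.
Variable R : realType.

Lemma frob2_mxtrace m n (X : 'M[R]_(m, n)) : frob2 X = \tr (X^T *m X).
Proof.
rewrite /frob2 /mxtrace exchange_big; apply: eq_bigr => j _; rewrite mxE.
by apply: eq_bigr => i _; rewrite !mxE expr2.
Qed.

Lemma objective_mxtraceE n r (A : 'M[R]_n) (B : 'M[R]_r) (Y : 'M[R]_(n, r)) :
  A^T = A -> B^T = B ->
  frob2 (A - Y *m Y^T) + 2 * frob_inner B (Y^T *m Y)
  = \tr (A *m A) - 2 * \tr (A *m (Y *m Y^T)) + \tr (Y^T *m Y *m (Y^T *m Y))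
    + 2 * \tr (B *m (Y^T *m Y)).
Proof.
move=> AT BT; rewrite frob2_mxtrace /frob_inner BT.
have PT : (Y *m Y^T)^T = Y *m Y^T by rewrite trmx_mul trmxK.
rewrite [(A - _)^T]raddfB /= AT PT mulmxBl !mulmxBr !raddfB /=.
rewrite (mxtrace_mulC (Y *m Y^T) A).
have -> : \tr (Y *m Y^T *m (Y *m Y^T)) = \tr (Y^T *m Y *m (Y^T *m Y)).
  by rewrite mulmxA mxtrace_mulC !mulmxA.
ring.
Qed.

Lemma objective_spectralE n r (A : 'M[R]_n) (B : 'M[R]_r) (s : 'I_n -> R) u
    (d : 'I_r -> R) v (Y : 'M[R]_(n, r)) (w : 'I_r -> 'cV[R]_r) (lam : 'I_r -> R) :
  A^T = A -> B^T = B ->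
  A = \sum_i s i *: (u i *m (u i)^T) -> \sum_i u i *m (u i)^T = 1%:M ->
  B = \sum_j d j *: (v j *m (v j)^T) ->
  \sum_k w k *m (w k)^T = 1%:M -> Y^T *m Y = \sum_k lam k *: (w k *m (w k)^T) ->
  frob2 (A - Y *m Y^T) + 2 * frob_inner B (Y^T *m Y)
  = \sum_(i < n) s i ^+ 2 - \sum_(k < r) (2 * (\sum_i s i * dot (u i) (Y *m w k) ^+ 2
        - lam k * \sum_j d j * dot (v j) (w k) ^+ 2) - lam k ^+ 2).
Proof.
move=> AT BT A_def u_res B_def w_res M_def.
have uo := resolution_orthonormal u_res; have wo := resolution_orthonormal w_res.
have trAA : \tr (A *m A) = \sum_(i < n) s i ^+ 2.
  rewrite {2}A_def mxtrace_mul_rank1_sum; apply: eq_bigr => i _.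
  by rewrite A_def rank1_sum_mulmx // dotZr uo eqxx mulr1 expr2.
have trAP : \tr (A *m (Y *m Y^T)) = \sum_k \sum_i s i * dot (u i) (Y *m w k) ^+ 2.
  rewrite (resolution_mulmx w_res) mulmx_sumr raddf_sum /=; apply: eq_bigr => k _.
  by rewrite mxtrace_mul_rank1 A_def dot_rank1_sum.
have trMM : \tr (Y^T *m Y *m (Y^T *m Y)) = \sum_k lam k ^+ 2.
  rewrite {2}M_def mxtrace_mul_rank1_sum; apply: eq_bigr => k _.
  by rewrite M_def rank1_sum_mulmx // dotZr wo eqxx mulr1 expr2.
have trBM : \tr (B *m (Y^T *m Y)) = \sum_k lam k * \sum_j d j * dot (v j) (w k) ^+ 2.
  by rewrite M_def mxtrace_mul_rank1_sum; apply: eq_bigr => k _; rewrite B_def dot_rank1_sum.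
rewrite objective_mxtraceE // trAA trAP trMM trBM.
by rewrite !sumrB -mulr_sumr sumrB; ring.
Qed.

Section Optimality.
Variables (n r : nat) (hrn : (r <= n)%N) (A : 'M[R]_n) (B : 'M[R]_r).
Variables (s : 'I_n -> R) (u : 'I_n -> 'cV[R]_n) (d : 'I_r -> R) (v : 'I_r -> 'cV[R]_r).
Hypotheses (AT : A^T = A) (BT : B^T = B).
Hypotheses (A_def : A = \sum_(i < n) s i *: (u i *m (u i)^T))
  (u_res : \sum_(i < n) u i *m (u i)^T = 1%:M).
Hypotheses (B_def : B = \sum_(j < r) d j *: (v j *m (v j)^T))
  (v_res : \sum_(j < r) v j *m (v j)^T = 1%:M).

Local Notation objective Y := (frob2 (A - Y *m Y^T) + 2 * frob_inner B (Y^T *m Y)).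
Local Notation gain := (\sum_(i < r) pospart (s (widen_ord hrn i) - d i) ^+ 2).

Lemma objective_ge (Y : 'M[R]_(n, r)) :
  (forall i j : 'I_n, (i <= j)%N -> s j <= s i) -> (forall i, 0 <= s i) ->
  (forall i j : 'I_r, (i <= j)%N -> d i <= d j) ->
  \sum_(i < n) s i ^+ 2 - gain <= objective Y.
Proof.
move=> s_decr s_ge0 d_incr.
have /symmetric_spectral_resolution [w [lam [w_res M_def]]] : (Y^T *m Y)^T = Y^T *m Y.
  by rewrite trmx_mul trmxK.
rewrite (objective_spectralE AT BT A_def u_res B_def w_res M_def) lerD2l lerN2.
have vo := resolution_orthonormal v_res; have wo := resolution_orthonormal w_res.
have Yw k l : dot (Y *m w k) (Y *m w l) = lam k * (k == l)%:R.
  by rewrite dot_mulmx mulmxA M_def rank1_sum_mulmx // dotZl wo.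
have lamE k : lam k = dot (Y *m w k) (Y *m w k) by rewrite Yw eqxx mulr1.
apply: coupling_gain_le => // [i k|j k|k|k|j|i].
- exact: sqr_ge0.
- exact: sqr_ge0.
- by rewrite resolution_parseval // lamE.
- by rewrite resolution_parseval // wo eqxx.
- under eq_bigr do rewrite dotC.
  by rewrite resolution_parseval // vo eqxx.
- under eq_bigr do rewrite lamE.
  apply: le_trans (bessel (u i) _) _.
    by move=> k l /negbTE kl; rewrite Yw kl mulr0.
  by rewrite (resolution_orthonormal u_res) eqxx.
Qed.

Local Notation c i := (pospart (s (widen_ord hrn i) - d i)).

Lemma objective_at_optimum :
  objective (\sum_(i < r) Num.sqrt (c i) *: (u (widen_ord hrn i) *m (v i)^T))
  = \sum_(i < n) s i ^+ 2 - gain.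
Proof.
set Y := \sum_i _.
have uo := resolution_orthonormal u_res; have vo := resolution_orthonormal v_res.
have widen_inj : injective (widen_ord hrn) by move=> i j /(congr1 val) ij; apply: val_inj.
have uo_widen := orthonormal_comp widen_inj uo.
have Yv j : Y *m v j = Num.sqrt (c j) *: u (widen_ord hrn j) by rewrite rank1_sum_mulmx.
have YtY : Y^T *m Y = \sum_j c j *: (v j *m (v j)^T).
  have YT : Y^T = \sum_j Num.sqrt (c j) *: (v j *m (u (widen_ord hrn j))^T).
    by rewrite raddf_sum /=; apply: eq_bigr => j _; rewrite linearZ /= trmx_mul trmxK.
  rewrite {2}/Y mulmx_sumr; apply: eq_bigr => j _.
  rewrite -scalemxAr mulmxA YT (rank1_sum_mulmx _ _ _ uo_widen) -scalemxAl scalerA.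
  by rewrite -expr2 sqr_sqrtr ?pospart_ge0.
rewrite (objective_spectralE AT BT A_def u_res B_def v_res YtY); congr (_ - _).
apply: eq_bigr => k _.
have -> : \sum_i s i * dot (u i) (Y *m v k) ^+ 2 = s (widen_ord hrn k) * c k.
  rewrite (bigD1 (widen_ord hrn k)) //= big1 => [|i /negbTE ik]; rewrite Yv dotZr uo.
    by rewrite eqxx mulr1 addr0 sqr_sqrtr ?pospart_ge0.
  by rewrite ik mulr0 expr0n mulr0.
have -> : \sum_j d j * dot (v j) (v k) ^+ 2 = d k.
  rewrite (bigD1 k) //= big1 => [|j /negbTE jk]; rewrite vo; last by rewrite jk expr0n mulr0.
  by rewrite eqxx expr1n mulr1 addr0.
by rewrite !sqr_pospart; ring.
Qed.

End Optimality.

End Objective.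

Theorem theorem19 (R : realType) (n r : nat) (hrn : (r <= n)%N)
    (A : 'M[R]_n) (B : 'M[R]_r)
    (s : 'I_n -> R) (u : 'I_n -> 'cV[R]_n)
    (d : 'I_r -> R) (v : 'I_r -> 'cV[R]_r) :
  A^T = A -> (forall x : 'cV[R]_n, 0 <= (x^T *m A *m x) 0 0) ->
  B^T = B -> (forall x : 'cV[R]_r, 0 <= (x^T *m B *m x) 0 0) ->
  A = \sum_(i < n) s i *: (u i *m (u i)^T) ->
  \sum_(i < n) u i *m (u i)^T = 1%:M ->
  (forall i j : 'I_n, (i <= j)%N -> s j <= s i) ->
  (forall i : 'I_n, 0 <= s i) ->
  B = \sum_(i < r) d i *: (v i *m (v i)^T) ->
  \sum_(i < r) v i *m (v i)^T = 1%:M ->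
  (forall i j : 'I_r, (i <= j)%N -> d i <= d j) ->
  (forall i : 'I_r, 0 <= d i) ->
  let f := fun Y : 'M[R]_(n, r) =>
    frob2 (A - Y *m Y^T) + 2 * frob_inner B (Y^T *m Y) in
  let val := \sum_(i < n) s i ^+ 2
             - \sum_(i < r) pospart (s (widen_ord hrn i) - d i) ^+ 2 in
  let Ystar := \sum_(i < r)
      Num.sqrt (pospart (s (widen_ord hrn i) - d i))
        *: (u (widen_ord hrn i) *m (v i)^T) in
  (forall Y : 'M[R]_(n, r), val <= f Y) /\ f Ystar = val.
Proof.
move=> AT _ BT _ A_def u_res s_decr s_ge0 B_def v_res d_incr _ f val Ystar.
rewrite {}/f {}/val {}/Ystar; split=> [Y|].
  by apply: (objective_ge hrn AT BT A_def u_res B_def v_res).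
exact: objective_at_optimum.
Qed.
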